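(* Let $\alpha$ be irrational with $\ln2/\ln3<\alpha<1$ and write $1c_\alpha=s_0s_1s_2\cdots$. Then $\Phi_{\mathbb{R}}(1c_\alpha)$ and $\Phi_{\mathbb{R}}(0c_\alpha)$ exist, $\Phi_{\mathbb{R}}(0c_\alpha)=3\Phi_{\mathbb{R}}(1c_\alpha)+1$, and for every $L\ge0$ the number $\Phi_{\mathbb{R}}(s_Ls_{L+1}\cdots)$ exists and satisfies $$\Phi_{\mathbb{R}}(0c_\alpha)\le\Phi_{\mathbb{R}}(s_Ls_{L+1}\cdots)\le\Phi_{\mathbb{R}}(1c_\alpha).$$
   Context: For $0<\alpha<1$ the Sturmian words are $1c_\alpha=(\lceil(j+1)\alpha\rceil-\lceil j\alpha\rceil)_{j\ge0}$ and $0c_\alpha=(\lfloor(j+1)\alpha\rfloor-\lfloor j\alpha\rfloor)_{j\ge0}$. For an infinite $0$-$1$ word $w$ with $1$'s at positions $d_0<d_1<\cdots$, $\Phi_{\mathbb{R}}(w)$ is the real sum $-\sum_{i\ge0}2^{d_i}/3^{i+1}$, said to exist if the series converges. *)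

From Stdlib Require Import Reals ZArith.
From Coquelicot Require Import Coquelicot.
Open Scope R_scope.

(* floor and ceiling on R ; up x is the unique integer with x < up x <= x + 1 *)
Definition rfloor (x : R) : Z := (up x - 1)%Z.
Definition rceil (x : R) : Z := (- rfloor (- x))%Z.

(* infinite 0-1 words, indexed from 0 *)
Definition word := nat -> Z.

Definition sturm1 (alpha : R) : word :=
  fun j => (rceil (INR (S j) * alpha) - rceil (INR j * alpha))%Z.
Definition sturm0 (alpha : R) : word :=
  fun j => (rfloor (INR (S j) * alpha) - rfloor (INR j * alpha))%Z.

Definition suffix (L : nat) (w : word) : word := fun j => w (L + j)%nat.

Fixpoint ones (w : word) (n : nat) : nat :=
  match n with
  | O => O
  | S m => (ones w m + (if Z.eqb (w m) 1 then 1 else 0))%nat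
  end.

(* Phi_R(w) = - sum_i 2^{d_i} / 3^{i+1}, where d_0 < d_1 < ... are the
   positions of the 1's.  Reindexed over positions j: the 1 at position
   j = d_i has index i, i.e. i+1 = ones w (j+1); other positions contribute 0. *)
Definition phi_term (w : word) (j : nat) : R :=
  if Z.eqb (w j) 1 then - (2 ^ j / 3 ^ (ones w (S j))) else 0.

Definition Phi_exists (w : word) : Prop := ex_series (phi_term w).
Definition Phi (w : word) : R := Series (phi_term w).

Definition irrational (x : R) : Prop :=
  ~ exists p q : Z, q <> 0%Z /\ x = IZR p / IZR q.

From Stdlib Require Import Reals ZArith Lra Lia.
From Coquelicot Require Import Coquelicot.
Open Scope R_scope.

(* For a 0-1 word w write N(j) = ones w j for the number of 1's
   before position j.  Each term of Phi telescopes: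
     phi_term w j = -1/2 * (2^j / 3^N(j) - 2^j / 3^N(j+1)),
   so Phi w = -1/2 * (1 + S w) with S w = sum_j 2^j / 3^N(j+1), as soon as the
   "weights" 2^j / 3^N(j+1) are summable.  They are if 3^N(j) grows faster
   than b^j for some b > 2; for a word whose counting function stays within 1
   of j*alpha this holds with b = 3^alpha, and b > 2 exactly because
   alpha > ln 2 / ln 3.  In this representation Phi is monotone in the counting
   function, and adding one more 1 before every position multiplies S by 1/3.
   The file first develops this theory for arbitrary 0-1 words, then proves
   the counting facts for Sturmian words: N counts ceil(j alpha) for 1c_alpha,
   floor(j alpha) for 0c_alpha, every suffix of 1c_alpha has a counting
   function squeezed between these two, and ceil = floor + 1 off the origin
   for irrational alpha. *)

Definition binary (w : word) : Prop := forall j, w j = 0%Z \/ w j = 1%Z.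

(* The j-th weight 2^j / 3^N(j+1); Phi is an affine function of their sum. *)
Definition weight (w : word) (j : nat) : R := 2 ^ j / 3 ^ ones w (S j).

(* 3^N(j) dominates b^j up to the factor 3: this makes the weights
   geometrically small when b > 2. *)
Definition grows (b : R) (w : word) : Prop := forall j, b ^ j <= 3 * 3 ^ ones w j.

Lemma pow3_pos (n : nat) : 0 < 3 ^ n.
Proof. apply pow_lt; lra. Qed.

Lemma ones_S_le (w : word) (j : nat) : (ones w j <= ones w (S j))%nat.
Proof. simpl; lia. Qed.

Lemma weight_nonneg (w : word) (j : nat) : 0 <= weight w j.
Proof.
  unfold weight, Rdiv. apply Rmult_le_pos.
  - apply pow_le; lra.
  - apply Rlt_le, Rinv_0_lt_compat, pow3_pos.
Qed.

Lemma phi_term_telescope (w : word) (Hw : binary w) (j : nat) :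
  phi_term w j = - (1/2) * (2 ^ j / 3 ^ ones w j - weight w j).
Proof.
  unfold phi_term, weight; simpl ones.
  pose proof (pow3_pos (ones w j)).
  destruct (Hw j) as [E|E]; rewrite E; simpl Z.eqb; cbv iota.
  - rewrite Nat.add_0_r. field. lra.
  - rewrite Nat.add_1_r. simpl pow. field. lra.
Qed.

(* Summing the telescoping terms; note 2^(N+1) / 3^N(N+1) = 2 * weight w N. *)
Lemma phi_partial_sum (w : word) (Hw : binary w) (N : nat) :
  sum_n (phi_term w) N = - (1/2) * (1 + sum_n (weight w) N - 2 * weight w N).
Proof.
  assert (Hnext : forall j, 2 ^ S j / 3 ^ ones w (S j) = 2 * weight w j).
  { intro j. unfold weight, Rdiv. simpl pow. ring. }
  induction N as [|N IH].
  - rewrite !sum_O, phi_term_telescope by exact Hw. simpl. field.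
  - rewrite !sum_Sn, IH, phi_term_telescope, Hnext by exact Hw.
    unfold plus; simpl. ring.
Qed.

Lemma weight_geometric_bound (w : word) (b : R) (Hb : 0 < b) (Hg : grows b w)
  (j : nat) : weight w j <= 3 * (2 / b) ^ j.
Proof.
  assert (Hbj : 0 < b ^ j) by (apply pow_lt; lra).
  assert (H3 : 3 ^ ones w j <= 3 ^ ones w (S j))
    by (apply Rle_pow; [lra | apply ones_S_le]).
  assert (Hden : b ^ j <= 3 * 3 ^ ones w (S j)) by (specialize (Hg j); lra).
  pose proof (pow3_pos (ones w (S j))).
  unfold weight, Rdiv. rewrite Rpow_mult_distr, pow_inv.
  replace (3 * (2 ^ j * / b ^ j)) with (2 ^ j * (3 * / b ^ j)) by ring.
  apply Rmult_le_compat_l; [apply pow_le; lra|].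
  replace (3 * / b ^ j) with (/ (b ^ j / 3)) by (field; lra).
  apply Rinv_le_contravar; [apply Rdiv_lt_0_compat|]; lra.
Qed.

Lemma weight_summable (w : word) (b : R) (Hb : 2 < b) (Hg : grows b w) :
  ex_series (weight w).
Proof.
  assert (Hq : 0 <= 2 / b < 1).
  { split; [apply Rlt_le, Rdiv_lt_0_compat; lra|].
    apply Rlt_div_l; lra. }
  apply (ex_series_le (weight w) (fun j => 3 * (2 / b) ^ j)).
  - intro j. rewrite Rabs_pos_eq by apply weight_nonneg.
    apply weight_geometric_bound; [lra | exact Hg].
  - apply (ex_series_scal_l 3 (fun j => (2 / b) ^ j)).
    exists (/ (1 - 2 / b)). apply is_series_geom. rewrite Rabs_pos_eq; lra.
Qed.

(* Passing to the limit in the partial sums; the boundary term vanishes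
   because the weights are summable. *)
Lemma Phi_is_series (w : word) (Hw : binary w) (Hsum : ex_series (weight w)) :
  is_series (phi_term w) (- (1/2) * (1 + Series (weight w))).
Proof.
  change (is_lim_seq (sum_n (phi_term w)) (- (1/2) * (1 + Series (weight w)))).
  apply (is_lim_seq_ext
    (fun N => - (1/2) * (1 + sum_n (weight w) N - 2 * weight w N))).
  { intro N. symmetry. apply phi_partial_sum, Hw. }
  replace (- (1/2) * (1 + Series (weight w)))
    with (- (1/2) * (1 + Series (weight w) - 2 * 0)) by ring.
  apply (is_lim_seq_scal_l _ (- (1/2)) (1 + Series (weight w) - 2 * 0)).
  apply is_lim_seq_minus'.
  - apply is_lim_seq_plus'; [apply is_lim_seq_const | exact (Series_correct _ Hsum)].
  - apply (is_lim_seq_scal_l _ 2 0). exact (ex_series_lim_0 _ Hsum).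
Qed.

Lemma Phi_formula (w : word) (b : R) (Hb : 2 < b) (Hw : binary w) (Hg : grows b w) :
  Phi_exists w /\ Phi w = - (1/2) * (1 + Series (weight w)).
Proof.
  pose proof (Phi_is_series w Hw (weight_summable w b Hb Hg)) as Hser.
  split; [eexists; exact Hser | exact (is_series_unique _ _ Hser)].
Qed.

(* More 1's early means smaller weights, hence a larger Phi. *)
Lemma Phi_le_of_ones_le (w w' : word) (b : R) (Hb : 2 < b)
  (Hw : binary w) (Hg : grows b w) (Hw' : binary w') (Hg' : grows b w')
  (Hle : forall j, (ones w j <= ones w' j)%nat) :
  Phi w <= Phi w'.
Proof.
  rewrite (proj2 (Phi_formula w b Hb Hw Hg)), (proj2 (Phi_formula w' b Hb Hw' Hg')).
  assert (Series (weight w') <= Series (weight w)); [|lra].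
  apply Series_le; [|exact (weight_summable w b Hb Hg)].
  intro j. split; [apply weight_nonneg|].
  unfold weight, Rdiv. apply Rmult_le_compat_l; [apply pow_le; lra|].
  apply Rinv_le_contravar; [apply pow3_pos|].
  apply Rle_pow; [lra | apply Hle].
Qed.

(* If w' has exactly one 1 more than w before every position j >= 1, the
   weights of w are three times those of w'. *)
Lemma Phi_of_one_more (w w' : word) (b : R) (Hb : 2 < b)
  (Hw : binary w) (Hg : grows b w) (Hw' : binary w') (Hg' : grows b w')
  (Hmore : forall j, ones w' (S j) = S (ones w (S j))) :
  Phi w = 3 * Phi w' + 1.
Proof.
  rewrite (proj2 (Phi_formula w b Hb Hw Hg)), (proj2 (Phi_formula w' b Hb Hw' Hg')).
  assert (Series (weight w) = 3 * Series (weight w')); [|lra].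
  rewrite <- Series_scal_l. apply Series_ext. intro j.
  unfold weight. rewrite Hmore, <- tech_pow_Rmult.
  pose proof (pow3_pos (ones w (S j))). field. lra.
Qed.

Lemma rfloor_spec (x : R) : IZR (rfloor x) <= x < IZR (rfloor x) + 1.
Proof. unfold rfloor. rewrite minus_IZR. destruct (archimed x). simpl. lra. Qed.

Lemma rceil_spec (x : R) : x <= IZR (rceil x) < x + 1.
Proof. unfold rceil. rewrite opp_IZR. destruct (rfloor_spec (- x)). lra. Qed.

Lemma Zle_of_IZR_lt_succ (k m : Z) : IZR k < IZR m + 1 -> (k <= m)%Z.
Proof. intro H. rewrite <- plus_IZR in H. apply lt_IZR in H. lia. Qed.

Lemma rfloor_le (x : R) (k : Z) : x - 1 < IZR k -> (rfloor x <= k)%Z.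
Proof. intro H. apply Zle_of_IZR_lt_succ. pose proof (rfloor_spec x). lra. Qed.

Lemma le_rceil (x : R) (k : Z) : IZR k < x + 1 -> (k <= rceil x)%Z.
Proof. intro H. apply Zle_of_IZR_lt_succ. pose proof (rceil_spec x). lra. Qed.

Lemma rfloor_IZR (k : Z) : rfloor (IZR k) = k.
Proof.
  apply Z.le_antisymm; [apply rfloor_le; lra|].
  apply Zle_of_IZR_lt_succ. pose proof (rfloor_spec (IZR k)). lra.
Qed.

Lemma rceil_IZR (k : Z) : rceil (IZR k) = k.
Proof. unfold rceil. rewrite <- opp_IZR, rfloor_IZR. lia. Qed.

Lemma rceil_nonint (x : R) (Hx : forall k : Z, x <> IZR k) :
  rceil x = (rfloor x + 1)%Z.
Proof.
  destruct (rfloor_spec x), (rceil_spec x).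
  assert (Hle : (rfloor x <= rceil x)%Z) by (apply Zle_of_IZR_lt_succ; lra).
  assert (Hge : (rceil x <= rfloor x + 1)%Z)
    by (apply Zle_of_IZR_lt_succ; rewrite plus_IZR; lra).
  assert (rceil x <> rfloor x); [|lia].
  intro E. apply (Hx (rfloor x)). rewrite E in *. lra.
Qed.

Lemma irrational_multiple_nonint (alpha : R) (Hirr : irrational alpha) (n : nat)
  (Hn : (1 <= n)%nat) (k : Z) : INR n * alpha <> IZR k.
Proof.
  intro E. apply Hirr. exists k, (Z.of_nat n). split; [lia|].
  rewrite <- INR_IZR_INZ, <- E. assert (0 < INR n) by (apply lt_0_INR; lia).
  field. lra.
Qed.

Lemma Z01_of_bounds (k : Z) : -1 < IZR k < 2 -> k = 0%Z \/ k = 1%Z.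
Proof.
  intros [H0 H1].
  assert ((0 <= k)%Z) by (apply Zle_of_IZR_lt_succ; simpl; lra).
  assert ((k <= 1)%Z) by (apply Zle_of_IZR_lt_succ; simpl; lra).
  lia.
Qed.

Lemma ones_counts (w : word) (c : nat -> Z) (Hw : binary w) (H0 : c 0%nat = 0%Z)
  (Hstep : forall j, w j = (c (S j) - c j)%Z) (n : nat) :
  Z.of_nat (ones w n) = c n.
Proof.
  induction n as [|n IH]; [exact (eq_sym H0)|].
  simpl ones. rewrite Nat2Z.inj_add, IH. specialize (Hstep n).
  destruct (Hw n) as [E|E]; rewrite E in *; simpl; lia.
Qed.

Lemma ones_suffix (w : word) (L n : nat) :
  (ones (suffix L w) n + ones w L)%nat = ones w (L + n).
Proof.
  induction n as [|n IH]; [rewrite Nat.add_0_r; reflexivity|].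
  rewrite Nat.add_succ_r. simpl ones. rewrite <- IH. unfold suffix at 2.
  destruct (w (L + n)%nat =? 1)%Z; lia.
Qed.

Definition tracks (alpha : R) (w : word) : Prop :=
  forall n, INR n * alpha - 1 < INR (ones w n) < INR n * alpha + 1.

Lemma grows_of_tracks (alpha : R) (w : word) (Ha : 0 < alpha) (Hw : tracks alpha w) :
  grows (Rpower 3 alpha) w.
Proof.
  intro j.
  rewrite <- Rpower_pow by (unfold Rpower; apply exp_pos).
  rewrite <- (Rpower_pow (ones w j) 3), Rpower_mult by lra.
  rewrite <- (Rpower_1 3) at 2 by lra. rewrite <- Rpower_plus.
  apply Rle_Rpower; [lra|]. destruct (Hw j). lra.
Qed.

Lemma Rpower_3_gt_2 (alpha : R) (Hlo : ln 2 / ln 3 < alpha) : 2 < Rpower 3 alpha.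
Proof.
  assert (0 < ln 3) by (rewrite <- ln_1; apply ln_increasing; lra).
  assert (ln 2 < alpha * ln 3) by (apply Rlt_div_l in Hlo; lra).
  unfold Rpower. rewrite <- (exp_ln 2) by lra. apply exp_increasing. lra.
Qed.

(* Counting functions of Sturmian words, for a slope 0 <= alpha <= 1 (which
   makes consecutive differences of floors and ceilings 0 or 1). *)
Section Sturmian.

Variable alpha : R.
Hypothesis Halpha : 0 <= alpha <= 1.

Lemma sturm1_binary : binary (sturm1 alpha).
Proof.
  intro j. apply Z01_of_bounds. unfold sturm1. rewrite minus_IZR, S_INR.
  pose proof (rceil_spec (INR j * alpha)). pose proof (rceil_spec ((INR j + 1) * alpha)).
  nra.
Qed.

Lemma sturm0_binary : binary (sturm0 alpha).
Proof.
  intro j. apply Z01_of_bounds. unfold sturm0. rewrite minus_IZR, S_INR.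
  pose proof (rfloor_spec (INR j * alpha)). pose proof (rfloor_spec ((INR j + 1) * alpha)).
  nra.
Qed.

Lemma ones_sturm1 (n : nat) : Z.of_nat (ones (sturm1 alpha) n) = rceil (INR n * alpha).
Proof.
  apply (ones_counts _ (fun n => rceil (INR n * alpha)) sturm1_binary); [|reflexivity].
  simpl. rewrite Rmult_0_l. exact (rceil_IZR 0).
Qed.

Lemma ones_sturm0 (n : nat) : Z.of_nat (ones (sturm0 alpha) n) = rfloor (INR n * alpha).
Proof.
  apply (ones_counts _ (fun n => rfloor (INR n * alpha)) sturm0_binary); [|reflexivity].
  simpl. rewrite Rmult_0_l. exact (rfloor_IZR 0).
Qed.

Lemma ones_suffix_sturm1 (L n : nat) :
  INR (ones (suffix L (sturm1 alpha)) n)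
  = IZR (rceil (INR (L + n) * alpha)) - IZR (rceil (INR L * alpha)).
Proof.
  rewrite <- !ones_sturm1, <- !INR_IZR_INZ, <- ones_suffix, plus_INR. ring.
Qed.

Lemma tracks_sturm1 : tracks alpha (sturm1 alpha).
Proof.
  intro n. rewrite (INR_IZR_INZ (ones _ n)), ones_sturm1.
  pose proof (rceil_spec (INR n * alpha)). lra.
Qed.

Lemma tracks_sturm0 : tracks alpha (sturm0 alpha).
Proof.
  intro n. rewrite (INR_IZR_INZ (ones _ n)), ones_sturm0.
  pose proof (rfloor_spec (INR n * alpha)). lra.
Qed.

Lemma tracks_suffix_sturm1 (L : nat) : tracks alpha (suffix L (sturm1 alpha)).
Proof.
  intro n. rewrite ones_suffix_sturm1, plus_INR.
  pose proof (rceil_spec (INR L * alpha)).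
  pose proof (rceil_spec ((INR L + INR n) * alpha)). nra.
Qed.

Lemma ones_between (w : word) (Hw : tracks alpha w) (n : nat) :
  (ones (sturm0 alpha) n <= ones w n <= ones (sturm1 alpha) n)%nat.
Proof.
  destruct (Hw n) as [Hlo Hhi]. rewrite (INR_IZR_INZ (ones w n)) in Hlo, Hhi.
  apply rfloor_le in Hlo. apply le_rceil in Hhi.
  rewrite <- ones_sturm0 in Hlo. rewrite <- ones_sturm1 in Hhi. lia.
Qed.

Lemma ones_sturm1_sturm0 (Hirr : irrational alpha) (n : nat) :
  ones (sturm1 alpha) (S n) = S (ones (sturm0 alpha) (S n)).
Proof.
  apply Nat2Z.inj. rewrite Nat2Z.inj_succ, ones_sturm1, ones_sturm0.
  rewrite rceil_nonint; [lia|].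
  apply irrational_multiple_nonint; [exact Hirr | lia].
Qed.

End Sturmian.

Theorem lemma25 (alpha : R) (Hirr : irrational alpha)
  (Hlo : ln 2 / ln 3 < alpha) (Hhi : alpha < 1) :
  Phi_exists (sturm1 alpha) /\ Phi_exists (sturm0 alpha) /\
  Phi (sturm0 alpha) = 3 * Phi (sturm1 alpha) + 1 /\
  (forall L : nat,
     Phi_exists (suffix L (sturm1 alpha)) /\
     Phi (sturm0 alpha) <= Phi (suffix L (sturm1 alpha)) <= Phi (sturm1 alpha)).
Proof.
  set (b := Rpower 3 alpha).
  assert (Hb : 2 < b) by (apply Rpower_3_gt_2; exact Hlo).
  assert (Hpos : 0 < alpha).
  { enough (0 < ln 2 / ln 3) by lra.
    apply Rdiv_lt_0_compat; rewrite <- ln_1; apply ln_increasing; lra. }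
  assert (Ha : 0 <= alpha <= 1) by lra.
  pose proof (sturm1_binary alpha Ha) as B1.
  pose proof (sturm0_binary alpha Ha) as B0.
  assert (G1 : grows b (sturm1 alpha)) by (apply grows_of_tracks, tracks_sturm1; lra).
  assert (G0 : grows b (sturm0 alpha)) by (apply grows_of_tracks, tracks_sturm0; lra).
  split; [exact (proj1 (Phi_formula _ b Hb B1 G1))|].
  split; [exact (proj1 (Phi_formula _ b Hb B0 G0))|].
  split; [exact (Phi_of_one_more _ _ b Hb B0 G0 B1 G1 (ones_sturm1_sturm0 alpha Ha Hirr))|].
  intro L.
  assert (BL : binary (suffix L (sturm1 alpha))) by (intro j; apply B1).
  pose proof (tracks_suffix_sturm1 alpha Ha L) as TL.
  assert (GL : grows b (suffix L (sturm1 alpha))) by (apply grows_of_tracks; assumption).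
  split; [exact (proj1 (Phi_formula _ b Hb BL GL))|].
  split; apply (Phi_le_of_ones_le _ _ b Hb); auto; intro j; apply (ones_between alpha Ha _ TL).
Qed.
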